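(* For every integer $m\ge 1$, the number of admissible sequences of length $m-1$ equals the Catalan number $C_m=\frac{1}{m+1}\binom{2m}{m}$.
   Context: A finite sequence of integers $\mathbf a=(a_1,\dots,a_n)$ is admissible if it is strictly increasing and $2i-1\le a_i\le 2n$ for all $1\le i\le n$ (the empty sequence, $n=0$, is admissible). *)

From mathcomp Require Import all_boot.
Set Implicit Arguments. Unset Strict Implicit. Unset Printing Implicit Defensive.

(* A finite integer sequence a = (a_1,...,a_n) is admissible if it is strictly
   increasing and 2i-1 <= a_i <= 2n for all 1 <= i <= n.
   Here sequences are 0-indexed: entry nth 0 s i is a_(i+1), so the
   condition reads 2(i+1)-1 = 2i+1 <= a_(i+1) <= 2n.  All entries are then
   positive, so taking them in nat loses nothing. *)
Definition admissible (s : seq nat) : bool :=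
  sorted ltn s &&
  all (fun i => (2 * i + 1 <= nth 0 s i) && (nth 0 s i <= 2 * size s))
      (iota 0 (size s)).

(* Admissible sequences of length n, encoded as n-tuples with entries in
   {0,...,2n} (every admissible sequence has entries <= 2n, so this
   encoding is a bijection onto the admissible sequences of length n). *)
Definition num_admissible (n : nat) : nat :=
  #|[pred t : n.-tuple 'I_(2 * n).+1 | admissible (map val t)]|.

Definition catalan (m : nat) : nat := 'C(2 * m, m) %/ m.+1.

From mathcomp Require Import all_boot zify.

(* Admissible sequences of length n are counted by the reflection principle.

   Write adm_lt B s for "s is strictly increasing, its i-th entry (0-indexed)
   is at least 2i+1, and all entries are < B"; an admissible sequence of
   length n is exactly an adm_lt (2n+1) sequence of length n.  Splitting on
   whether the last entry is the largest allowed value B - 1 gives an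
   explicit, duplicate-free enumeration adm_enum B n of these sequences,
   whose sizes satisfy Pascal's recurrence.  By induction on B this yields the ballot formula
     #adm_enum (B+1) n = C(B, n) - C(B, n-2)      (for 2n <= B + 2),
   so there are C(2n, n) - C(2n, n+2) admissible sequences of length n, and a
   short computation with binomial coefficients identifies this difference
   with the Catalan number C_(n+1). *)

Definition adm_lt (B : nat) (s : seq nat) : bool :=
  [&& sorted ltn s, all (fun i => 2 * i + 1 <= nth 0 s i) (iota 0 (size s))
    & all (fun x => x < B) s].

Lemma sorted_ltn_rcons (s : seq nat) (x : nat) :
  sorted ltn (rcons s x) = sorted ltn s && all (fun y => y < x) s.
Proof.
rewrite !(sorted_pairwise ltn_trans) -cats1 pairwise_cat allrel1r /=.
by rewrite andbT andbC.
Qed.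

Lemma lower_bounds_rcons (s : seq nat) (x : nat) :
  all (fun i => 2 * i + 1 <= nth 0 (rcons s x) i) (iota 0 (size (rcons s x)))
  = all (fun i => 2 * i + 1 <= nth 0 s i) (iota 0 (size s))
    && (2 * size s + 1 <= x).
Proof.
rewrite size_rcons -(addn1 (size s)) iotaD all_cat /= add0n nth_rcons ltnn eqxx andbT.
congr (_ && _); apply: eq_in_all => i; rewrite mem_iota add0n => /andP [_ lt_i].
by rewrite nth_rcons lt_i.
Qed.

Lemma adm_lt_rcons (B : nat) (s : seq nat) (x : nat) :
  adm_lt B (rcons s x) = adm_lt x s && (2 * size s + 1 <= x < B).
Proof.
rewrite /adm_lt sorted_ltn_rcons lower_bounds_rcons all_rcons.
have [lt_xB | _] := ltnP x B; last by rewrite !andbF.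
case s_lt_x: (all _ s); last by rewrite !andbF.
have -> : all (fun y => y < B) s.
  by apply/allP => y /(allP s_lt_x) lt_yx; apply: ltn_trans lt_yx lt_xB.
by rewrite !andbT andbA andbAC.
Qed.

(* The admissible-shaped sequences of length n with entries < B: those with
   entries < B - 1, followed by those ending with B - 1 (possible only when
   the last position n - 1 allows the value B - 1, i.e. 2(n-1)+1 <= B - 1). *)
Fixpoint adm_enum (B n : nat) : seq (seq nat) :=
  match B, n with
  | _, 0 => [:: [::]]
  | 0, _.+1 => [::]
  | B'.+1, k.+1 =>
      adm_enum B' n ++
      (if 2 * k + 1 <= B' then map (rcons^~ B') (adm_enum B' k) else [::])
  end.

Lemma adm_enumS (B k : nat) :
  adm_enum B.+1 k.+1 =
  adm_enum B k.+1 ++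
  (if 2 * k + 1 <= B then map (rcons^~ B) (adm_enum B k) else [::]).
Proof. by []. Qed.

Lemma mem_adm_enum (B n : nat) (s : seq nat) :
  (s \in adm_enum B n) = (size s == n) && adm_lt B s.
Proof.
elim: B n s => [|B IH] [|k] s //=.
- by case: s.
- by case/lastP: s => [|s x] //; rewrite adm_lt_rcons ltn0 !andbF.
- by case: s.
case/lastP: s => [|s x]; rewrite mem_cat IH.
  by case: ifP => //= _; apply/negbTE/mapP => -[t _ /(congr1 size)]; rewrite size_rcons.
have mem_last : (rcons s x \in map (rcons^~ B) (adm_enum B k))
              = (x == B) && (size s == k) && adm_lt B s.
  rewrite -andbA -IH.
  by apply/mapP/andP => [[t t_in /rcons_inj [-> ->]] | [/eqP -> s_in]]; last exists s.
rewrite (fun_if (fun l => rcons s x \in l)) mem_last in_nil.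
rewrite !adm_lt_rcons size_rcons eqSS ltnS (leq_eqVlt x B).
case: (eqVneq x B) => [-> | _] /=; last by rewrite if_same orbF.
rewrite ltnn !andbF /=.
case: (eqVneq (size s) k) => [-> | _]; last by case: ifP.
by case: ifP; rewrite ?andbT ?andbF.
Qed.

Lemma uniq_adm_enum (B n : nat) : uniq (adm_enum B n).
Proof.
elim: B n => [|B IH] [|k] //=.
rewrite cat_uniq IH /=; case: ifP => //= _.
rewrite map_inj_uniq ?IH ?andbT; last by move=> s t /rcons_inj [].
apply/hasPn => _ /mapP [t _ ->].
by rewrite mem_adm_enum adm_lt_rcons ltnn !andbF.
Qed.

(* The last entry of a nonempty admissible sequence of length n is at least
   2n - 1, so there are none with entries < B when B < 2n. *)
Lemma adm_enum_small (B n : nat) : B < 2 * n -> adm_enum B n = [::].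
Proof.
move=> lt_B_2n; case E: (adm_enum B n) => [// | s ss].
have := mem_head s ss; rewrite -E mem_adm_enum {E}.
case/lastP: s => [|s x]; first by case: n lt_B_2n.
rewrite adm_lt_rcons size_rcons => /and3P [/eqP size_s _ bounds].
exfalso; lia.
Qed.

(* C(B, n - 2), read as 0 when n < 2: the number of sequences removed by the
   reflection principle in the ballot formula below. *)
Definition binom2 (B n : nat) : nat := if n is k.+2 then 'C(B, k) else 0.

Lemma binom2S (B n : nat) : binom2 B.+1 n.+1 = binom2 B n.+1 + binom2 B n.
Proof. by case: n => [|[|k]] //=; rewrite ?bin0 // binS addnC. Qed.

Lemma binom2E (B n : nat) : n <= B + 2 -> binom2 B n = 'C(B, B + 2 - n).
Proof.
case: n => [|[|k]] le_n_B /=; try by rewrite bin_small //; lia.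
by rewrite -[LHS]bin_sub; [congr 'C(_, _) | ]; lia.
Qed.

Lemma size_adm_enum (B n : nat) :
  2 * n <= B + 2 -> size (adm_enum B.+1 n) + binom2 B n = 'C(B, n).
Proof.
elim: B n => [|B IH] [|k] le_2n_B //; first by case: k le_2n_B => [|j] //; lia.
rewrite adm_enumS size_cat; case: ifP => [le_k_B | gt_k_B].
  rewrite size_map binom2S binS.
  have := IH k.+1 ltac:(lia); have := IH k ltac:(lia); lia.
rewrite adm_enum_small ?binom2E /=; try lia.
by congr 'C(_, _); lia.
Qed.

Lemma admissibleE (s : seq nat) : admissible s = adm_lt (2 * size s).+1 s.
Proof.
rewrite /admissible /adm_lt
  (all_predI (fun i => 2 * i + 1 <= nth 0 s i) (fun i => nth 0 s i <= 2 * size s)).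
congr [&& _, _ & _].
by rewrite -[X in _ = all _ X](mkseq_nth 0 s) /mkseq all_map.
Qed.

Lemma num_admissibleE (n : nat) :
  num_admissible n = size (adm_enum (2 * n).+1 n).
Proof.
rewrite /num_admissible cardE.
rewrite -(size_map (fun t : n.-tuple 'I_(2 * n).+1 => map val t)).
apply/perm_size/uniq_perm.
- rewrite map_inj_uniq ?enum_uniq // => t1 t2 /(inj_map val_inj) eq_t.
  exact: val_inj.
- exact: uniq_adm_enum.
- move=> s; rewrite mem_adm_enum; apply/mapP/andP.
    move=> [t]; rewrite mem_enum inE admissibleE size_map size_tuple => adm_t ->.
    by rewrite size_map size_tuple.
  move=> [/eqP size_s adm_s].
  have size_s' : size (map (inord : nat -> 'I_(2 * n).+1) s) == n.
    by rewrite size_map size_s.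
  have val_s : map val (Tuple size_s') = s.
    rewrite /= -map_comp -[RHS]map_id; apply/eq_in_map => x x_in /=.
    by apply: inordK; move: adm_s => /and3P [_ _ /allP /(_ x x_in)].
  exists (Tuple size_s'); last by rewrite val_s.
  by rewrite mem_enum inE val_s admissibleE size_s.
Qed.

(* C_(n+1) = C(2n, n) - C(2n, n + 2), from the ratios of consecutive
   binomial coefficients C(2n, n), C(2n, n + 1), C(2n, n + 2). *)
Lemma catalan_reflection (n : nat) :
  catalan n.+1 + 'C(2 * n, n.+2) = 'C(2 * n, n).
Proof.
set x := 'C(2 * n, n); set y := 'C(2 * n, n.+1); set z := 'C(2 * n, n.+2).
have ratio_xy : n.+1 * y = n * x.
  by rewrite /y mul_bin_left; congr (_ * _); lia.
have ratio_yz : n.+2 * z = n.-1 * y.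
  by rewrite /z mul_bin_left; congr (_ * _); lia.
have central : 'C(2 * n.+1, n.+1) = 2 * (y + x).
  have sym : 'C((2 * n).+1, n) = 'C((2 * n).+1, n.+1).
    by rewrite -[RHS]bin_sub; [congr 'C(_, _) | ]; lia.
  rewrite (_ : 2 * n.+1 = (2 * n).+2); last lia.
  by rewrite binS sym binS -/x -/y; lia.
have le_zx : z <= x by nia.
(* C(2n+2, n+1) = (n+2) (x - z), so its quotient by n+2 is x - z. *)
rewrite /catalan (_ : 'C(2 * n.+1, n.+1) = n.+2 * (x - z)) ?mulKn ?subnK //.
rewrite central mulnBr ratio_yz.
clearbody x y z; case: n ratio_xy {ratio_yz central} => [|k] /=; nia.
Qed.

Theorem mainTheorem6 (m : nat) : 1 <= m -> num_admissible m.-1 = catalan m.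
Proof.
(* For m = n + 1: both sides plus C(2n, n+2) equal C(2n, n). *)
case: m => [// | n] _ /=.
apply/(@addIn 'C(2 * n, n.+2)); rewrite catalan_reflection num_admissibleE.
have -> : 'C(2 * n, n.+2) = binom2 (2 * n) n.
  by rewrite binom2E; [congr 'C(_, _) | ]; lia.
by rewrite size_adm_enum //; lia.
Qed.
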